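(* Let $T:\mathbf{Set}\to\mathbf{Set}$ be a functor and $\Lambda$ a strongly expressive set of monotone singleton-preserving predicate liftings for $T$. Let $(X,\xi)$ be a $T$-coalgebra and let $\lambda_1,\dots,\lambda_k$ be $k$-ary monotone singleton-preserving predicate liftings for $T$, each obtained from a member of $\Lambda$ by reordering, duplicating and/or adding dummy arguments. Let $(A_1,\dots,A_k)$ be the greatest fixed point (w.r.t. componentwise inclusion) of the monotone map $h:(\mathcal{P}X)^k\to(\mathcal{P}X)^k$, $$h(X_1,\dots,X_k)=\big(\xi^{-1}[\lambda_{1,X}(X_1,\dots,X_k)],\dots,\xi^{-1}[\lambda_{k,X}(X_1,\dots,X_k)]\big).$$ Then for each $i$, all elements of $A_i$ are behaviourally equivalent to each other, and for all $i,j$ either $A_i\cap A_j=\varnothing$ or $A_i=A_j$.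
   Context: An $n$-ary predicate lifting for $T$ is a family $\lambda_X:(\mathcal{P}X)^n\to\mathcal{P}(TX)$ natural w.r.t. preimages ($\lambda_X(f^{-1}[A_1],\dots,f^{-1}[A_n])=(Tf)^{-1}[\lambda_Y(A_1,\dots,A_n)]$); monotone if monotone in every argument; singleton-preserving if $|\lambda_X(\{x_1\},\dots,\{x_n\})|=1$ always. $\Lambda$ is strongly expressive if for every set $X$ and $t\in TX$ there exist $\lambda/n\in\Lambda$ and $x_i\in X$ with $\{t\}=\lambda_X(\{x_1\},\dots,\{x_n\})$. A $T$-coalgebra is $(X,\xi)$ with $\xi:X\to TX$; coalgebra morphisms $h$ satisfy $Th\circ\xi=\zeta\circ h$; two states are behaviourally equivalent if some pair of coalgebra morphisms into a common coalgebra identifies them. *)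

From mathcomp Require Import all_boot.
Set Implicit Arguments. Unset Strict Implicit. Unset Printing Implicit Defensive.

Section Defs.
Variable T : Type -> Type.
Variable fmap : forall X Y : Type, (X -> Y) -> T X -> T Y.

Definition is_functor : Prop :=
  (forall X (t : T X), fmap (fun x : X => x) t = t) /\
  (forall X Y Z (f : X -> Y) (g : Y -> Z) (t : T X),
      fmap (fun x => g (f x)) t = fmap g (fmap f t)).

Definition pred_lifting (n : nat) :=
  forall X : Type, ('I_n -> X -> Prop) -> T X -> Prop.

Definition natural_lifting n (lam : pred_lifting n) : Prop :=
  forall X Y (f : X -> Y) (A : 'I_n -> Y -> Prop) (t : T X),
    lam X (fun i x => A i (f x)) t <-> lam Y A (fmap f t).

Definition monotone_lifting n (lam : pred_lifting n) : Prop :=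
  forall X (A B : 'I_n -> X -> Prop),
    (forall i x, A i x -> B i x) -> forall t, lam X A t -> lam X B t.

Definition singleton_preserving n (lam : pred_lifting n) : Prop :=
  forall X (x : 'I_n -> X), exists t : T X,
    forall u, lam X (fun i y => y = x i) u <-> u = t.

(* a set Lambda of liftings, indexed by L, with arities ar *)
Definition strongly_expressive (L : Type) (ar : L -> nat)
  (lam : forall l, pred_lifting (ar l)) : Prop :=
  forall X (t : T X), exists (l : L) (x : 'I_(ar l) -> X),
    forall u, lam l X (fun i y => y = x i) u <-> u = t.

Definition coalg_morphism (X : Type) (xi : X -> T X) (Y : Type) (zeta : Y -> T Y)
  (h : X -> Y) : Prop :=
  forall x, fmap h (xi x) = zeta (h x).

Definition beh_equiv (X1 : Type) (xi1 : X1 -> T X1) (x1 : X1)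
  (X2 : Type) (xi2 : X2 -> T X2) (x2 : X2) : Prop :=
  exists (Z : Type) (zeta : Z -> T Z) (h1 : X1 -> Z) (h2 : X2 -> Z),
    coalg_morphism xi1 zeta h1 /\ coalg_morphism xi2 zeta h2 /\ h1 x1 = h2 x2.

End Defs.

(* the k-ary lifting obtained from lam by the reindexing s
   (reordering / duplicating / adding dummy arguments):
   (X_1..X_k) |-> lam (X_{s 1}, ..., X_{s n}) *)
Definition reindex_lifting (T : Type -> Type) (n k : nat) (lam : pred_lifting T n)
  (s : 'I_n -> 'I_k) : pred_lifting T k :=
  fun X S => lam X (fun m => S (s m)).

Definition hmap (T : Type -> Type) (k : nat) (lamk : 'I_k -> pred_lifting T k)
  (X : Type) (xi : X -> T X) (S : 'I_k -> X -> Prop) : 'I_k -> X -> Prop :=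
  fun j x => lamk j X S (xi x).

Definition is_gfp (X : Type) (k : nat) (F : ('I_k -> X -> Prop) -> 'I_k -> X -> Prop)
  (A : 'I_k -> X -> Prop) : Prop :=
  (forall j x, F A j x <-> A j x) /\
  (forall B : 'I_k -> X -> Prop, (forall j x, F B j x <-> B j x) ->
     forall j x, B j x -> A j x).

From Stdlib Require Import Relations Classical ClassicalEpsilon.
From Stdlib Require Import FunctionalExtensionality PropExtensionality ProofIrrelevance.
From mathcomp Require Import all_boot.

(* Glue every index i to the elements of A_i inside X + {1..k} and take the
   equivalence this generates.  Each index i carries the canonical structure
   t_i with {t_i} = lambda_i({1}, ..., {k}); singleton preservation forces
   every element of A_i to have, after pushing along the quotient, the same
   structure as t_i, so xi descends to a coalgebra on the quotient and the
   quotient map identifies all elements of each A_i.  Conversely the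
   preimages of the classes of the indices form a post-fixed point of h, hence
   lie below the greatest fixed point: A_i = A_j as soon as they meet. *)

Lemma gfp_coind (X : Type) (k : nat)
    (F : ('I_k -> X -> Prop) -> 'I_k -> X -> Prop)
    (F_mono : forall S S', (forall j x, S j x -> S' j x) ->
                           forall j x, F S j x -> F S' j x)
    (A : 'I_k -> X -> Prop) (A_gfp : is_gfp F A)
    (P : 'I_k -> X -> Prop) (P_post : forall j x, P j x -> F P j x) :
  forall j x, P j x -> A j x.
Proof.
pose G j x := exists Q : 'I_k -> X -> Prop,
  (forall j x, Q j x -> F Q j x) /\ Q j x.
have G_post j x : G j x -> F G j x.
  move=> [Q [Q_post Qjx]]; apply: (F_mono Q); last exact: Q_post.
  by move=> j' x' Qx'; exists Q.
have G_pre j x : F G j x -> G j x.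
  move=> FGjx; exists (F G); split => // j' x'; apply: F_mono; exact: G_post.
move=> j x Pjx; apply: (proj2 A_gfp G); last by exists P.
by move=> j' x'; split; [apply: G_pre | apply: G_post].
Qed.

Arguments gfp_coind {X k F} F_mono {A} A_gfp P.

Lemma hmap_monotone (T : Type -> Type) (k : nat)
    (lamk : 'I_k -> pred_lifting T k)
    (lamk_mono : forall j, monotone_lifting (lamk j))
    (X : Type) (xi : X -> T X) (S S' : 'I_k -> X -> Prop) :
  (forall j x, S j x -> S' j x) ->
  forall j x, hmap lamk xi S j x -> hmap lamk xi S' j x.
Proof. by move=> SS' j x; apply: lamk_mono. Qed.

Arguments hmap_monotone {T k lamk} lamk_mono {X xi} S S'.

Lemma reindex_monotone (T : Type -> Type) (n k : nat) (lam : pred_lifting T n)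
    (s : 'I_n -> 'I_k) :
  monotone_lifting lam -> monotone_lifting (reindex_lifting lam s).
Proof. by move=> lam_mono X S S' SS'; apply: lam_mono => m; apply: SS'. Qed.

Arguments reindex_monotone {T n k lam s}.

Section Quotient.
Variables (U : Type) (R : relation U).

Local Notation equiv := (clos_refl_sym_trans U R).

(* Classes of the equivalence generated by R; no decidability is needed. *)
Definition quot : Type := {P : U -> Prop | exists r, P = equiv r}.

Definition quot_cl (r : U) : quot := exist _ (equiv r) (ex_intro _ r erefl).

Definition quot_repr (z : quot) : U :=
  proj1_sig (constructive_indefinite_description _ (proj2_sig z)).

Lemma quot_cl_eq r r' : equiv r r' -> quot_cl r = quot_cl r'.
Proof.
move=> rr'; apply: subset_eq_compat.
apply: functional_extensionality => r2; apply: propositional_extensionality.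
by split => [rr2 | r'r2]; [apply: rst_trans (rst_sym _ _ _ _ rr') rr2
                          | apply: rst_trans rr' r'r2].
Qed.

Lemma quot_reprP r : equiv r (quot_repr (quot_cl r)).
Proof.
rewrite /quot_repr; case: constructive_indefinite_description => r' /= E.
by rewrite E; apply: rst_refl.
Qed.

Lemma quot_repr_cl (B : Type) (f : U -> B) :
  (forall a b, R a b -> f a = f b) -> forall r, f (quot_repr (quot_cl r)) = f r.
Proof.
move=> f_resp r; elim: (quot_reprP r) => [a b /f_resp | | a b _ | a b c _ Eab _ Ebc];
  congruence.
Qed.

End Quotient.

Arguments quot {U} R.
Arguments quot_cl {U R} r.
Arguments quot_cl_eq {U R r r'}.
Arguments quot_repr {U R} z.

Section SingletonLiftings.
Variables (T : Type -> Type) (fmap : forall X Y : Type, (X -> Y) -> T X -> T Y).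
Variables (n : nat) (lam : pred_lifting T n).

Lemma lifting_image_singletons :
  natural_lifting fmap lam -> monotone_lifting lam ->
  forall X Y (f : X -> Y) (S : 'I_n -> X -> Prop) (y : 'I_n -> Y),
  (forall i x, S i x -> f x = y i) ->
  forall t, lam X S t -> lam Y (fun i z => z = y i) (fmap _ _ f t).
Proof.
move=> lam_nat lam_mono X Y f S y Sy t lamSt.
apply/(lam_nat _ _ f (fun i z => z = y i)); exact: lam_mono _ _ _ Sy t lamSt.
Qed.

Lemma singleton_lifting_uniq :
  singleton_preserving lam ->
  forall X (x : 'I_n -> X) u v,
  lam X (fun i y => y = x i) u -> lam X (fun i y => y = x i) v -> u = v.
Proof.
move=> lam_sing X x u v lamu lamv; have [t Ht] := lam_sing X x.
by rewrite (Ht u).1 // (Ht v).1.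
Qed.

End SingletonLiftings.

Arguments lifting_image_singletons {T fmap n lam}.
Arguments singleton_lifting_uniq {T n lam}.

Section GfpQuotient.
Variables (T : Type -> Type) (fmap : forall X Y : Type, (X -> Y) -> T X -> T Y).
Variables (L : Type) (ar : L -> nat) (lam : forall l : L, pred_lifting T (ar l)).
Hypothesis lam_nat : forall l, natural_lifting fmap (lam l).
Hypothesis lam_mono : forall l, monotone_lifting (lam l).
Hypothesis lam_sing : forall l, singleton_preserving (lam l).
Variables (X : Type) (xi : X -> T X).
Variables (k : nat) (lk : 'I_k -> L) (s : forall j : 'I_k, 'I_(ar (lk j)) -> 'I_k).
Variable A : 'I_k -> X -> Prop.

Local Notation F := (hmap (fun j => reindex_lifting (lam (lk j)) (s j)) xi).

Hypothesis A_gfp : is_gfp F A.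

Definition glue (r r' : X + 'I_k) : Prop :=
  if (r, r') is (inl x, inr i) then A i x else False.

Local Notation Z := (quot glue).

Definition quot_state (x : X) : Z := quot_cl (inl x).
Definition quot_index (i : 'I_k) : Z := quot_cl (inr i).

Lemma quot_state_index i x : A i x -> quot_state x = quot_index i.
Proof. by move=> Aix; apply/quot_cl_eq/rst_step. Qed.

Definition index_struct (j : 'I_k) : T 'I_k :=
  proj1_sig (constructive_indefinite_description _ (lam_sing (lk j) 'I_k (s j))).

Lemma index_structP j :
  lam (lk j) 'I_k (fun m i => i = s j m) (index_struct j).
Proof.
rewrite /index_struct; case: constructive_indefinite_description => t /= Ht.
exact/Ht.
Qed.

Lemma index_struct_image j :
  lam (lk j) Z (fun m z => z = quot_index (s j m))
    (fmap _ _ quot_index (index_struct j)).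
Proof.
apply: (lifting_image_singletons (lam_nat (lk j)) (lam_mono (lk j)));
  last exact: index_structP.
by move=> m i ->.
Qed.

Definition glue_struct (r : X + 'I_k) : T Z :=
  match r with
  | inl x => fmap _ _ quot_state (xi x)
  | inr j => fmap _ _ quot_index (index_struct j)
  end.

Lemma glue_struct_resp r r' : glue r r' -> glue_struct r = glue_struct r'.
Proof.
case: r r' => [x|?] [?|i] //= Aix.
apply: (singleton_lifting_uniq (lam_sing (lk i))) (index_struct_image i).
apply: (lifting_image_singletons (lam_nat (lk i)) (lam_mono (lk i)));
  last exact: (proj1 A_gfp i x).2.
by move=> m y; apply: quot_state_index.
Qed.

Definition quot_coalg (z : Z) : T Z := glue_struct (quot_repr z).

Lemma quot_state_morphism : coalg_morphism fmap xi quot_coalg quot_state.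
Proof. by move=> x; rewrite /quot_coalg quot_repr_cl //; apply: glue_struct_resp. Qed.

Lemma index_class_sub j x : quot_state x = quot_index j -> A j x.
Proof.
have F_mono :=
  hmap_monotone (xi := xi) (fun i => reindex_monotone (s := s i) (lam_mono (lk i))).
apply: (gfp_coind F_mono A_gfp (fun j x => quot_state x = quot_index j)).
move=> {}j {}x Ex.
apply/(lam_nat (lk j) _ _ quot_state (fun m z => z = quot_index (s j m))).
rewrite quot_state_morphism Ex /quot_coalg quot_repr_cl; last exact: glue_struct_resp.
exact: index_struct_image.
Qed.

End GfpQuotient.

Arguments glue {X k} A.
Arguments quot_state {X k} A x.
Arguments quot_index {X k} A i.
Arguments quot_state_index {X k A i x}.
Arguments quot_coalg {T fmap L ar lam} lam_sing {X} xi {k lk} s A z.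
Arguments quot_state_morphism {T fmap L ar lam} lam_nat lam_mono lam_sing
  {X xi k lk s A} A_gfp x.
Arguments index_class_sub {T fmap L ar lam} lam_nat lam_mono lam_sing
  {X xi k lk s A} A_gfp {j x}.

Theorem mainTheorem7
  (T : Type -> Type) (fmap : forall X Y : Type, (X -> Y) -> T X -> T Y)
  (Hfun : is_functor fmap)
  (L : Type) (ar : L -> nat) (lam : forall l : L, pred_lifting T (ar l))
  (Hnat : forall l, natural_lifting fmap (lam l))
  (Hmon : forall l, monotone_lifting (lam l))
  (Hsing : forall l, singleton_preserving (lam l))
  (Hexp : strongly_expressive lam)
  (X : Type) (xi : X -> T X)
  (k : nat) (lk : 'I_k -> L) (s : forall j : 'I_k, 'I_(ar (lk j)) -> 'I_k)
  (A : 'I_k -> X -> Prop)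
  (HA : is_gfp (hmap (fun j => reindex_lifting (lam (lk j)) (s j)) xi) A) :
  (forall i x y, A i x -> A i y -> beh_equiv fmap xi x xi y) /\
  (forall i j, (forall x, ~ (A i x /\ A j x)) \/ (forall x, A i x <-> A j x)).
Proof.
have A_cl i x : A i x -> quot_state A x = quot_index A i := quot_state_index.
have cl_A := index_class_sub Hnat Hmon Hsing HA.
have h_mor := quot_state_morphism Hnat Hmon Hsing HA.
split.
- move=> i x y Aix Aiy.
  exists (quot (glue A)), (quot_coalg (fmap := fmap) Hsing xi s A).
  exists (quot_state A), (quot_state A).
  by do 2!split => //; rewrite (A_cl _ _ Aix) (A_cl _ _ Aiy).
- move=> i j; case: (classic (exists x, A i x /\ A j x)) => [[x [Aix Ajx]] | disj].
    have Eij : quot_index A i = quot_index A j.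
      by rewrite -(A_cl _ _ Aix) (A_cl _ _ Ajx).
    by right => y; split => Ay; apply: cl_A; rewrite (A_cl _ _ Ay) // Eij.
  by left => x Aijx; apply: disj; exists x.
Qed.
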